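(* Let $(M,\circ,\mathrm{OR})$ be a free $\mathbb{D}$-module of rank 3 with scalar product and orientation, and let $z_1,z_2,z_3\in M\setminus\epsilon M$ be sliding vectors (zero pitch) with parallel axes. Then $z_1,z_2,z_3$ are $\mathbb{R}$-linearly dependent if and only if their axes are coplanar.
   Context: $\mathbb{D}=\{a+\epsilon b: a,b\in\mathbb{R}\}$, $\epsilon^2=0$. Scalar product: symmetric $\mathbb{D}$-bilinear $\circ:M\times M\to\mathbb{D}$ with $\mathfrak{Re}(x\circ x)\ge0$, equality iff $x\in\epsilon M$; orientation: one of the two classes of ordered bases under $\{b'_j=A_{jk}b_k\}\sim\{b_k\}$ iff $\det\mathfrak{Re}(A)>0$. $V=M/\epsilon M$, $\pi$ the quotient map. $E$ is the set of real 3-dimensional subspaces $P\subset M$ with $\mathfrak{Du}(x\circ y)=0$ for $x,y\in P$ and $P\cap\epsilon M=\{0\}$, a Euclidean affine space over $V$ (with $B-A:=d^ke_k$ where $e^B_i=e^A_i+\epsilon\,\epsilon_{ijk}d^ke^A_j$, $\{e_i\}$ positive orthonormal in $V$, $e^P_i\in P$ its lift). Each $z\in M\setminus\epsilon M$ is uniquely $z=(a+\epsilon b)u$ with $a>0$, $b\in\mathbb{R}$, $u\circ u=1$; its pitch is $b/a$ (a sliding vector is one with pitch $0$) and its axis is the line $\{P\in E: u\in P\}$, with direction $\pi(u)$. *)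

(* Dual numbers D = R + eps R are represented as pairs (Re, Du);
   the free rank-3 D-module M is represented by D^3 = R^3 x R^3, where
   x = (x.1, x.2) stands for x.1 + eps x.2 (componentwise). *)
From HB Require Import structures.
From mathcomp Require Import all_boot all_order all_algebra.
Set Implicit Arguments.
Unset Strict Implicit.
Unset Printing Implicit Defensive.
Import Order.TTheory GRing.Theory Num.Theory.
Local Open Scope ring_scope.

Notation Mod R := ('rV[R]_3 * 'rV[R]_3)%type.

Definition dadd (R : rcfType) (c d : R * R) : R * R := (c.1 + d.1, c.2 + d.2).
Definition dmul (R : rcfType) (c d : R * R) : R * R :=
  (c.1 * d.1, c.1 * d.2 + c.2 * d.1).

(* D-scalar action on M : (c0 + eps c1)(x0 + eps x1) = c0 x0 + eps (c0 x1 + c1 x0) *)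
Definition dscale (R : rcfType) (c : R * R) (x : Mod R) : Mod R :=
  (c.1 *: x.1, c.1 *: x.2 + c.2 *: x.1).

Definition eps (R : rcfType) (x : Mod R) : Mod R := (0, x.1).
Definition in_epsM (R : rcfType) (x : Mod R) : Prop := exists y, x = eps y.

(* quotient map pi : M -> V = M / eps M, with V identified with R^3 *)
Definition proj (R : rcfType) (x : Mod R) : 'rV[R]_3 := x.1.

Definition is_scalar_product (R : rcfType) (sp : Mod R -> Mod R -> R * R) : Prop :=
  (forall (c : R * R) (x y w : Mod R),
      sp (dscale c x + y) w = dadd (dmul c (sp x w)) (sp y w)) /\
  (forall x y, sp x y = sp y x) /\
  (forall x, 0 <= (sp x x).1 /\ ((sp x x).1 = 0 <-> in_epsM x)).

Definition vdot (R : rcfType) (sp : Mod R -> Mod R -> R * R) (a b : 'rV[R]_3) : R :=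
  (sp (a, 0) (b, 0)).1.

Definition levi (R : rcfType) (i j k : 'I_3) : R :=
  \det (\matrix_(r < 3, c < 3) ((c == nth i [:: i; j; k] r)%:R : R)).

(* Orientation: [o = true] means the class of the standard D-basis of D^3 is the
   positive one. A basis e of V is positive iff det of its coordinate matrix
   (rows e_i) has the sign prescribed by o. *)
Definition pos_orthonormal (R : rcfType) (sp : Mod R -> Mod R -> R * R) (o : bool)
    (e : 'I_3 -> 'rV[R]_3) : Prop :=
  (forall i j, vdot sp (e i) (e j) = (i == j)%:R) /\
  (if o then 0 < \det (\matrix_(i < 3, j < 3) e i 0 j)
   else \det (\matrix_(i < 3, j < 3) e i 0 j) < 0).

Definition in_E (R : rcfType) (sp : Mod R -> Mod R -> R * R) (P : {vspace Mod R}) : Prop :=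
  \dim P = 3%N /\
  (forall x y, x \in P -> y \in P -> (sp x y).2 = 0) /\
  (forall x, x \in P -> in_epsM x -> x = 0).

(* Diff A B v  <->  B - A = v  in the affine space E over V *)
Definition Diff (R : rcfType) (sp : Mod R -> Mod R -> R * R) (o : bool)
    (A B : {vspace Mod R}) (v : 'rV[R]_3) : Prop :=
  exists e : 'I_3 -> 'rV[R]_3, pos_orthonormal sp o e /\
  exists d : 'I_3 -> R, v = \sum_(k < 3) d k *: e k /\
  forall eA eB : 'I_3 -> Mod R,
    (forall i, eA i \in A /\ proj (eA i) = e i) ->
    (forall i, eB i \in B /\ proj (eB i) = e i) ->
    forall i, eB i = eA i + eps (\sum_(j < 3) \sum_(k < 3) (levi R i j k * d k) *: eA j).

Definition unit_decomp (R : rcfType) (sp : Mod R -> Mod R -> R * R)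
    (z : Mod R) (a b : R) (u : Mod R) : Prop :=
  0 < a /\ sp u u = (1, 0) /\ z = dscale (a, b) u.

Definition is_sliding (R : rcfType) (sp : Mod R -> Mod R -> R * R) (z : Mod R) : Prop :=
  ~ in_epsM z /\ exists a b u, unit_decomp sp z a b u /\ b / a = 0.

Definition on_axis (R : rcfType) (sp : Mod R -> Mod R -> R * R) (z : Mod R)
    (P : {vspace Mod R}) : Prop :=
  in_E sp P /\ exists a b u, unit_decomp sp z a b u /\ u \in P.

Definition axis_dir (R : rcfType) (sp : Mod R -> Mod R -> R * R) (z : Mod R)
    (w : 'rV[R]_3) : Prop :=
  exists a b u, unit_decomp sp z a b u /\ w = proj u.

Definition parallel_axes (R : rcfType) (sp : Mod R -> Mod R -> R * R) (z1 z2 : Mod R) : Prop :=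
  exists w1 w2, axis_dir sp z1 w1 /\ axis_dir sp z2 w2 /\ (<[w1]> = <[w2]>)%VS.

(* the axes of z1 z2 z3 lie in a common affine plane {A0 + w | w in W} of E *)
Definition coplanar_axes (R : rcfType) (sp : Mod R -> Mod R -> R * R) (o : bool)
    (z1 z2 z3 : Mod R) : Prop :=
  exists (A0 : {vspace Mod R}) (W : {vspace 'rV[R]_3}),
    in_E sp A0 /\ \dim W = 2%N /\
    forall z P, z \in [:: z1; z2; z3] -> on_axis sp z P ->
      exists2 w, w \in W & Diff sp o A0 P w.

From HB Require Import structures.
From mathcomp Require Import all_boot all_order all_algebra ring lra.
Set Implicit Arguments.
Unset Strict Implicit.
Unset Printing Implicit Defensive.
Import Order.TTheory GRing.Theory Num.Theory.
Local Open Scope ring_scope.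

(* Write the scalar product through two real Gram matrices [S] (real part) and
   [K] (dual part).  A point of [E] is the graph {(a, a L)} of a matrix [L] with
   [K + L S + (L S)^T = 0]; two such matrices differ by an [S]-skew matrix [D],
   and [B - A] is the axial vector [v] of [D] (in an orthonormal frame, [a D] is
   [v] x [a]).  A sliding vector [z] lies on the axis through [P] iff [z \in P].
   For parallel axes [z_i.1 = m_i w], so the [z_i] are dependent iff their
   moments [z_i.2 - m_i z_1.2] relative to [z_1] are collinear, say along [y].
   If they are, the axial vectors of all points of the three axes, measured from
   a point of the first axis, lie in the plane spanned by [w] and a unit vector
   orthogonal to [w] and [y].  Conversely, if they all lie in a plane [W], then
   [w \in W] and every moment [w D] is orthogonal to [W], hence the moments lie
   on the normal line of [W]. *)

Local Notation i0 := (@Ordinal 3 0 isT).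
Local Notation i1 := (@Ordinal 3 1 isT).
Local Notation i2 := (@Ordinal 3 2 isT).

Lemma ord3P (P : 'I_3 -> Prop) : P i0 -> P i1 -> P i2 -> forall i, P i.
Proof.
by move=> P0 P1 P2 [[|[|[|//]]] lti]; rewrite (bool_irrelevance lti isT).
Qed.

Lemma sum3 (V : nmodType) (F : 'I_3 -> V) : \sum_(i < 3) F i = F i0 + F i1 + F i2.
Proof.
by rewrite !big_ord_recr big_ord0 /= add0r; congr (F _ + F _ + F _); apply: val_inj.
Qed.

Lemma det3 (R : comNzRingType) (A : 'M[R]_3) : \det A =
  A i0 i0 * A i1 i1 * A i2 i2 - A i0 i0 * A i1 i2 * A i2 i1
  - A i0 i1 * A i1 i0 * A i2 i2 + A i0 i1 * A i1 i2 * A i2 i0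
  + A i0 i2 * A i1 i0 * A i2 i1 - A i0 i2 * A i1 i1 * A i2 i0.
Proof.
(* Indexing through [inord] lets [/=] compute the ordinals produced by the expansion. *)
set a := fun i j : nat => A (inord i) (inord j).
have -> : A = \matrix_(i, j) a i j by apply/matrixP => i j; rewrite mxE /a !inord_val.
rewrite (expand_det_row _ i0) sum3 /cofactor !(expand_det_row _ ord0).
rewrite !big_ord_recr !big_ord0 /= /cofactor !det_mx11 !mxE /=.
ring.
Qed.

Section MatrixForms.
Variables (R : comNzRingType) (n : nat).

(* Unlike [mxE], this does not also expand the products inside [u] and [v]. *)
Lemma mx11_add (u v : 'M[R]_1) : (u + v) 0 0 = u 0 0 + v 0 0.
Proof. by rewrite mxE. Qed.

Lemma mx11_mul (u : 'M[R]_1) (a : 'rV[R]_n) : u *m a = u 0 0 *: a.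
Proof. by rewrite {1}[u]mx11_scalar mul_scalar_mx. Qed.

Lemma form_trmx (A : 'M[R]_n) (a b : 'rV[R]_n) :
  (a *m A *m b^T) 0 0 = (b *m A^T *m a^T) 0 0.
Proof.
have -> : b *m A^T *m a^T = (a *m A *m b^T)^T by rewrite !trmx_mul trmxK mulmxA.
by rewrite [RHS]mxE.
Qed.

Lemma form_delta (A : 'M[R]_n) i j :
  ((delta_mx 0 i : 'rV_n) *m A *m (delta_mx 0 j : 'rV_n)^T) 0 0 = A i j.
Proof. by rewrite -rowE trmx_delta -colE !mxE. Qed.

End MatrixForms.

Section LeviMatrix.
Variable R : rcfType.
Implicit Types (d x : 'rV[R]_3) (A : 'M[R]_3).

Definition levi_mx d : 'M[R]_3 := \matrix_(i, j) \sum_k levi R i j k * d 0 k.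

Definition axial A : 'rV[R]_3 := \row_k [:: A i1 i2; A i2 i0; A i0 i1]`_k.

Ltac simp_consts :=
  rewrite ?(subrr, subr0, sub0r, mulr0, mul0r, addr0, add0r, mulr1, mul1r, mulrN1).

Lemma levi_mxE d : levi_mx d =
  d 0 i0 *: (delta_mx i1 i2 - delta_mx i2 i1) + d 0 i1 *: (delta_mx i2 i0 - delta_mx i0 i2)
  + d 0 i2 *: (delta_mx i0 i1 - delta_mx i1 i0).
Proof.
apply/matrixP => i j; rewrite !mxE sum3 /levi !det3 !mxE.
by elim/ord3P: i; elim/ord3P: j => /=; simp_consts; ring.
Qed.

Lemma levi_mxD d d' : levi_mx (d + d') = levi_mx d + levi_mx d'.
Proof.
by apply/matrixP => i j; rewrite !mxE -big_split; apply: eq_bigr => k _; rewrite mxE mulrDr.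
Qed.

Lemma levi_mx0 : levi_mx 0 = 0.
Proof. by apply/matrixP => i j; rewrite !mxE big1 // => k _; rewrite mxE mulr0. Qed.

Lemma levi_mx_tr d : (levi_mx d)^T = - levi_mx d.
Proof.
apply/matrixP => i j; rewrite levi_mxE !mxE.
by elim/ord3P: i; elim/ord3P: j => /=; simp_consts; ring.
Qed.

Lemma mul_levi_mx x d : x *m levi_mx d = \row_j
  [:: x 0 i2 * d 0 i1 - x 0 i1 * d 0 i2; x 0 i0 * d 0 i2 - x 0 i2 * d 0 i0;
      x 0 i1 * d 0 i0 - x 0 i0 * d 0 i1]`_j.
Proof.
apply/rowP => j; rewrite levi_mxE !mxE sum3 !mxE.
by elim/ord3P: j => /=; simp_consts; ring.
Qed.

Lemma levi_mx_self d : d *m levi_mx d = 0.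
Proof. by apply/rowP => j; rewrite mul_levi_mx !mxE; elim/ord3P: j => /=; ring. Qed.

Lemma levi_mxK d : axial (levi_mx d) = d.
Proof. by apply/rowP => k; rewrite levi_mxE !mxE; elim/ord3P: k => /=; simp_consts; ring. Qed.

Lemma axialK A : A^T = - A -> levi_mx (axial A) = A.
Proof.
move=> /matrixP skA; have sk i j : A j i = - A i j by have := skA i j; rewrite !mxE.
have diag i : A i i = 0 by move: (sk i i); lra.
apply/matrixP => i j; rewrite levi_mxE !mxE; elim/ord3P: i; elim/ord3P: j => /=; simp_consts;
  rewrite ?diag ?[A i1 i0]sk ?[A i2 i0]sk ?[A i2 i1]sk; ring.
Qed.

Lemma dotmx_eq0 d : ((d *m d^T) 0 0 == 0) = (d == 0).
Proof.
apply/idP/eqP => [|->]; last by rewrite mul0mx mxE.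
rewrite mxE psumr_eq0 => [/allP d0|k _]; last by rewrite mxE -expr2 sqr_ge0.
apply/rowP => k; apply/eqP; rewrite mxE -sqrf_eq0.
by have := d0 k (mem_index_enum k); rewrite mxE -expr2.
Qed.

Lemma levi_mx2 x d :
  x *m levi_mx d *m levi_mx d = (x *m d^T) 0 0 *: d - (d *m d^T) 0 0 *: x.
Proof.
by apply/rowP => j; rewrite !mul_levi_mx !mxE !sum3 !mxE; elim/ord3P: j => /=; ring.
Qed.

Lemma levi_mx_ker x d : x *m levi_mx d = 0 -> d = 0 \/ x \in <[d]>%VS.
Proof.
move=> xd0; have [->|d0] := eqVneq d 0; [by left | right].
have := levi_mx2 x d; rewrite xd0 mul0mx => /esym/eqP; rewrite subr_eq0 => /eqP xd.
apply/vlineP; exists ((x *m d^T) 0 0 / (d *m d^T) 0 0).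
by rewrite mulrC -scalerA xd scalerA mulVf ?scale1r ?dotmx_eq0.
Qed.
End LeviMatrix.

Section Rotation.
Variables (R : rcfType) (E : 'M[R]_3).
Hypothesis E_unit : E \in unitmx.
Implicit Types (d x : 'rV[R]_3).

(* The map [a |-> v x a] with [v = d *m E], written in the frame whose rows are [E]. *)
Definition rot d := invmx E *m levi_mx d *m E.

Lemma rot_axis d : d *m E *m rot d = 0.
Proof. by rewrite /rot !mulmxA mulmxK // levi_mx_self mul0mx. Qed.

Lemma rot0 : rot 0 = 0.
Proof. by rewrite /rot levi_mx0 mulmx0 mul0mx. Qed.

Lemma rotD d d' : rot (d + d') = rot d + rot d'.
Proof. by rewrite /rot levi_mxD mulmxDr mulmxDl. Qed.

Lemma rot_eq0 d : rot d = 0 -> d = 0.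
Proof.
move=> /(congr1 (fun M => E *m M *m invmx E)).
rewrite /rot !mulmxA mulmxV // mul1mx mulmxK // mulmx0 mul0mx => /(congr1 (@axial _)).
by rewrite levi_mxK => ->; apply/rowP => k; rewrite !mxE; elim/ord3P: k.
Qed.

Lemma rot_ker x d : x *m rot d = 0 -> d = 0 \/ x \in <[d *m E]>%VS.
Proof.
rewrite /rot !mulmxA => /(congr1 (mulmx^~ (invmx E))); rewrite mulmxK // mul0mx.
case/levi_mx_ker => [|/vlineP [k xk]]; [by left | right].
by apply/vlineP; exists k; rewrite scalemxAl -xk mulmxKV.
Qed.

End Rotation.

Lemma fst_sum (R : rcfType) I r (P : pred I) (F : I -> Mod R) :
  (\sum_(i <- r | P i) F i).1 = \sum_(i <- r | P i) (F i).1.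
Proof. exact: (big_morph fst). Qed.

Lemma snd_sum (R : rcfType) I r (P : pred I) (F : I -> Mod R) :
  (\sum_(i <- r | P i) F i).2 = \sum_(i <- r | P i) (F i).2.
Proof. exact: (big_morph snd). Qed.

Section Graph.
Variable R : rcfType.
Implicit Types (L : 'M[R]_3) (x : Mod R).

Lemma in_epsM_fst x : in_epsM x <-> x.1 = 0.
Proof. by split => [[y ->] | x1] //; exists (x.2, 0); case: x x1 => ? ? /= ->. Qed.

Definition graph_fun L (a : 'rV[R]_3) : Mod R := (a, a *m L).

Lemma graph_fun_is_linear L : linear (graph_fun L).
Proof. by move=> k a b; rewrite /graph_fun mulmxDl -scalemxAl. Qed.

HB.instance Definition _ L :=
  GRing.isLinear.Build R 'rV[R]_3 (Mod R) _ (graph_fun L) (graph_fun_is_linear L).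

Definition graph L : {vspace Mod R} := (linfun (graph_fun L) @: fullv)%VS.

Lemma mem_graph L x : (x \in graph L) = (x.2 == x.1 *m L).
Proof.
apply/memv_imgP/eqP => [[a _ ->]|x2]; first by rewrite lfunE.
by exists x.1; rewrite ?memvf // lfunE; case: x x2 => ? ? /= ->.
Qed.

Lemma dim_graph L : \dim (graph L) = 3.
Proof.
rewrite limg_dim_eq ?dimvf ?dim_matrix // capfv; apply/eqP/lker0P => a b.
by rewrite !lfunE => -[].
Qed.

Lemma proj_is_linear : linear (@proj R).
Proof. by []. Qed.

HB.instance Definition _ :=
  GRing.isLinear.Build R (Mod R) 'rV[R]_3 _ (@proj R) proj_is_linear.

Lemma graphP (P : {vspace Mod R}) : \dim P = 3 ->
  (forall x, x \in P -> x.1 = 0 -> x = 0) -> exists L, P = graph L.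
Proof.
move=> dimP P0.
have projP : (linfun (@proj R) @: P)%VS = fullv.
  apply/eqP; rewrite eqEdim subvf limg_dim_eq ?dimvf ?dim_matrix ?dimP //.
  apply/eqP; rewrite -subv0; apply/subvP => x /memv_capP [xP].
  by rewrite memv_ker lfunE memv0 => /eqP /(P0 x xP) ->.
have /fin_all_exists [xs xsP] i : exists x, x \in P /\ x.1 = delta_mx 0 i.
  have := memvf (delta_mx 0 i : 'rV[R]_3); rewrite -projP => /memv_imgP [x xP ->].
  by exists x; rewrite lfunE.
exists (\matrix_i (xs i).2); apply/eqP; rewrite eq_sym eqEdim dimP dim_graph leqnn andbT.
apply/subvP => x; rewrite mem_graph => /eqP x2.
have -> : x = \sum_i x.1 0 i *: xs i.
  apply: injective_projections; rewrite ?fst_sum ?snd_sum.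
    by rewrite {1}(row_sum_delta x.1); apply: eq_bigr => i _ /=; rewrite (xsP i).2.
  by rewrite x2 mulmx_sum_row; apply: eq_bigr => i _ /=; rewrite rowK.
by apply: memv_suml => i _; rewrite memvZ ?(xsP i).1.
Qed.

End Graph.

Section ScalarProduct.
Variables (R : rcfType) (sp : Mod R -> Mod R -> R * R).
Hypothesis hsp : is_scalar_product sp.
Implicit Types (a b c w : 'rV[R]_3) (x y : Mod R) (L D : 'M[R]_3).

Definition gram_re : 'M[R]_3 := \matrix_(i, j) (sp (delta_mx 0 i, 0) (delta_mx 0 j, 0)).1.
Definition gram_du : 'M[R]_3 := \matrix_(i, j) (sp (delta_mx 0 i, 0) (delta_mx 0 j, 0)).2.

Local Notation S := gram_re.
Local Notation K := gram_du.
Local Notation "''[' a , b ]" := (vdot sp a b).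

Lemma spC x y : sp x y = sp y x.
Proof. by case: hsp => _ []. Qed.

Lemma sp0l y : sp 0 y = (0, 0).
Proof.
case: hsp => /(_ (1, 0) 0 0 y) + _; rewrite /dscale /dadd /dmul /= !scaler0 !addr0.
by case: (sp 0 y) => a b [] /= ha hb; congr (_, _); lra.
Qed.

Lemma sp_dscalel (c : R * R) x y : sp (dscale c x) y = dmul c (sp x y).
Proof.
case: hsp => /(_ c x 0 y) + _; rewrite addr0 sp0l => ->.
by rewrite /dadd /dmul /= !addr0.
Qed.

Lemma sp_linl k x y (z : Mod R) : sp (k *: x + y) z =
  (k * (sp x z).1 + (sp y z).1, k * (sp x z).2 + (sp y z).2).
Proof.
have -> : k *: x = dscale (k, 0) x by rewrite /dscale /= scale0r addr0; case: x.
by case: hsp => -> _; rewrite /dadd /dmul /= mul0r addr0.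
Qed.

Lemma sp_suml I (r : seq I) (c : I -> R) (xs : I -> Mod R) y :
  sp (\sum_(i <- r) c i *: xs i) y =
  (\sum_(i <- r) c i * (sp (xs i) y).1, \sum_(i <- r) c i * (sp (xs i) y).2).
Proof.
elim: r => [|i r IH]; first by rewrite !big_nil sp0l.
by rewrite !big_cons sp_linl IH.
Qed.

Lemma sp_re a b : sp (a, 0) (b, 0) = ((a *m S *m b^T) 0 0, (a *m K *m b^T) 0 0).
Proof.
have pairE v : ((v, 0) : Mod R) = \sum_i v 0 i *: (delta_mx 0 i, 0).
  apply: injective_projections; rewrite ?fst_sum ?snd_sum /= -?row_sum_delta //.
  by rewrite big1 // => i _; rewrite scaler0.
rewrite pairE sp_suml; congr (_, _); rewrite mxE; under [RHS]eq_bigr do rewrite !mxE mulr_suml;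
  rewrite exchange_big; apply: eq_bigr => i _ /=;
  rewrite spC pairE sp_suml mulr_sumr; apply: eq_bigr => j _ /=;
  by rewrite spC mxE mulrCA mulrC.
Qed.


Lemma sp_split x y :
  sp x y = ((sp (x.1, 0) y).1, (sp (x.2, 0) y).1 + (sp (x.1, 0) y).2).
Proof.
have xE : x = dscale (0, 1) (x.2, 0) + (x.1, 0).
  by apply: injective_projections; rewrite /= ?scale0r ?scaler0 ?scale1r ?add0r ?addr0.
by rewrite {1}xE; case: hsp => -> _; rewrite /dadd /dmul /= !mul0r !add0r mul1r.
Qed.

Lemma spE x y : sp x y =
  ((x.1 *m S *m y.1^T) 0 0,
   (x.1 *m K *m y.1^T + x.2 *m S *m y.1^T + x.1 *m S *m y.2^T) 0 0).
Proof.
have split_r a : sp (a, 0) y = ((sp (a, 0) (y.1, 0)).1,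
    (sp (a, 0) (y.2, 0)).1 + (sp (a, 0) (y.1, 0)).2).
  by rewrite spC sp_split /= ![sp (_, 0) (a, 0)]spC.
by rewrite sp_split !split_r !sp_re /= !mxE; congr (_, _); ring.
Qed.

Lemma vdotE a b : '[a, b] = (a *m S *m b^T) 0 0.
Proof. by rewrite /vdot sp_re. Qed.

Lemma gram_re_tr : S^T = S.
Proof. by apply/matrixP => i j; rewrite !mxE spC. Qed.

Lemma gram_du_tr : K^T = K.
Proof. by apply/matrixP => i j; rewrite !mxE spC. Qed.

Lemma vdotC a b : '[a, b] = '[b, a].
Proof. by rewrite /vdot spC. Qed.

Lemma vdot_gt0 a : a != 0 -> 0 < '[a, a].
Proof.
case: hsp => _ [_ /(_ (a, 0)) [ge0 eq0]] a0; rewrite lt_def ge0 andbT.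
by apply: contra a0 => /eqP /eq0 [y [-> _]].
Qed.

Lemma gram_re_unit : S \in unitmx.
Proof.
rewrite unitmxE unitfE; apply/negP => /det0P [a a0 aS0].
by have := vdot_gt0 a0; rewrite vdotE aS0 mul0mx mxE ltxx.
Qed.



Lemma vdotDl a b c : '[a + b, c] = '[a, c] + '[b, c].
Proof. by rewrite !vdotE !mulmxDl mx11_add. Qed.

Lemma vdotZl k a b : '[k *: a, b] = k * '[a, b].
Proof. by rewrite !vdotE -!scalemxAl mxE. Qed.

Lemma vdotNl a b : '[- a, b] = - '[a, b].
Proof. by rewrite -scaleN1r vdotZl mulN1r. Qed.

Lemma vdotBl a b c : '[a - b, c] = '[a, c] - '[b, c].
Proof. by rewrite vdotDl vdotNl. Qed.

Lemma vdotDr a b c : '[a, b + c] = '[a, b] + '[a, c].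
Proof. by rewrite !(vdotC a) vdotDl. Qed.

Lemma vdotZr k a b : '[a, k *: b] = k * '[a, b].
Proof. by rewrite !(vdotC a) vdotZl. Qed.

Lemma vdotNr a b : '[a, - b] = - '[a, b].
Proof. by rewrite !(vdotC a) vdotNl. Qed.

Lemma vdot0l a : '[0, a] = 0.
Proof. by rewrite vdotE !mul0mx mxE. Qed.

Lemma vdot0r a : '[a, 0] = 0.
Proof. by rewrite vdotC vdot0l. Qed.

Definition skew D := (D *m S)^T = - (D *m S).

Definition graph_cond L := K + L *m S + (L *m S)^T = 0.

Lemma sp_graph_du L a b :
  (sp (a, a *m L) (b, b *m L)).2 = (a *m (K + L *m S + (L *m S)^T) *m b^T) 0 0.
Proof.
by rewrite spE /= !trmx_mul gram_re_tr !mulmxDr !mulmxDl !mulmxA.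
Qed.

Lemma in_E_graph L : in_E sp (graph L) <-> graph_cond L.
Proof.
split => [[_ [du0 _]] | LK].
  apply/matrixP => i j; rewrite -form_delta -sp_graph_du mxE.
  by apply: du0; rewrite mem_graph.
split; first exact: dim_graph.
split => [[a a'] [b b'] | x]; rewrite !mem_graph /=.
  by move=> /eqP -> /eqP ->; rewrite sp_graph_du LK mulmx0 mul0mx mxE.
move=> /eqP x2 /in_epsM_fst x1.
by apply: injective_projections; rewrite /= ?x2 x1 ?mul0mx.
Qed.

Lemma in_EP P : in_E sp P -> exists2 L, P = graph L & graph_cond L.
Proof.
move=> EP; case: (EP) => dimP [_ P0].
have [L PL] : exists L, P = graph L.
  by apply: graphP dimP _ => x xP /in_epsM_fst; apply: P0.
by exists L => //; apply/in_E_graph; rewrite -PL.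
Qed.

Lemma graph_condD L D : graph_cond L -> graph_cond (L + D) <-> skew D.
Proof.
rewrite /graph_cond /skew => LK.
have -> : K + (L + D) *m S + ((L + D) *m S)^T =
    K + L *m S + (L *m S)^T + (D *m S + (D *m S)^T).
  by rewrite mulmxDl linearD /= !addrA; congr (_ + _); rewrite addrAC.
rewrite LK add0r.
by split => [/eqP | ->]; rewrite ?addrN // addrC addr_eq0 => /eqP.
Qed.

Lemma skewD D D' : skew D -> skew D' -> skew (D + D').
Proof. by rewrite /skew mulmxDl linearD opprD /= => -> ->. Qed.

Lemma skew_vdot D a b : skew D -> '[a *m D, b] = - '[a, b *m D].
Proof.
move=> sk; rewrite !vdotE trmx_mul -[S in RHS]gram_re_tr !mulmxA.
rewrite -[in RHS](mulmxA a) -trmx_mul sk.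
by rewrite mulmxN mulNmx [in RHS]mxE opprK !mulmxA.
Qed.

Lemma skew_vdot_self D a : skew D -> '[a *m D, a] = 0.
Proof. by move=> /(skew_vdot a a); rewrite vdotC; lra. Qed.

Lemma skew_through w c : w != 0 -> '[c, w] = 0 -> exists2 D, skew D & w *m D = c.
Proof.
move=> w0 cw; set g := '[w, w]; have g0 : g != 0 by rewrite gt_eqF ?vdot_gt0.
exists (g^-1 *: (S *m w^T *m c - S *m c^T *m w)).
  rewrite /skew -scalemxAl linearZ /= mulmxBl linearB /= !trmx_mul !trmxK gram_re_tr.
  by rewrite !mulmxA -scalerN opprB.
rewrite linearZ /= mulmxBr !mulmxA !mx11_mul -!vdotE vdotC cw scale0r subr0.
by rewrite scalerA mulVf ?scale1r.
Qed.

End ScalarProduct.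

Definition frame_mx (R : rcfType) (e : 'I_3 -> 'rV[R]_3) : 'M[R]_3 := \matrix_(i, j) e i 0 j.

Lemma row_frame_mx (R : rcfType) (e : 'I_3 -> 'rV[R]_3) i : row i (frame_mx e) = e i.
Proof. by apply/rowP => j; rewrite !mxE. Qed.

Lemma frame_mx_sum (R : rcfType) (e : 'I_3 -> 'rV[R]_3) (d : 'rV[R]_3) :
  d *m frame_mx e = \sum_k d 0 k *: e k.
Proof. by rewrite mulmx_sum_row; apply: eq_bigr => k _; rewrite row_frame_mx. Qed.

Section Frames.
Variables (R : rcfType) (sp : Mod R -> Mod R -> R * R).
Hypothesis hsp : is_scalar_product sp.
Local Notation S := (gram_re sp).
Local Notation "''[' a , b ]" := (vdot sp a b).

Lemma frame_formE (e : 'I_3 -> 'rV[R]_3) (M : 'M[R]_3) i j :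
  (frame_mx e *m M *m S *m (frame_mx e)^T) i j = '[e i *m M, e j].
Proof.
by rewrite -form_delta !mulmxA -rowE -mulmxA -trmx_mul -rowE !row_frame_mx vdotE.
Qed.

Variables (e : 'I_3 -> 'rV[R]_3).
Hypothesis e_ortho : forall i j, '[e i, e j] = (i == j)%:R.
Local Notation E := (frame_mx e).

Lemma frame_gram : E *m S *m E^T = 1%:M.
Proof.
by apply/matrixP => i j; rewrite -[X in X *m S]mulmx1 frame_formE mulmx1 e_ortho mxE.
Qed.

Lemma frame_unit : E \in unitmx.
Proof. by have [] := mulmx1_unit (etrans (mulmxA E S E^T) frame_gram). Qed.

Lemma invmx_frame : invmx E = S *m E^T.
Proof. by rewrite -[LHS]mulmx1 -frame_gram !mulmxA mulVmx ?frame_unit // mul1mx. Qed.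

Lemma rot_skew d : skew sp (rot E d).
Proof.
have ES : E *m S = (invmx E)^T by rewrite invmx_frame trmx_mul trmxK gram_re_tr.
rewrite /skew /rot -(mulmxA _ E S) ES !trmx_mul trmxK levi_mx_tr.
by rewrite mulNmx mulmxN !mulmxA.
Qed.

Lemma skew_rot D : skew sp D -> D = rot E (axial (E *m D *m S *m E^T)).
Proof.
move=> skD; rewrite /rot axialK; last first.
  rewrite -(mulmxA E D S) trmx_mul trmx_mul trmxK skD.
  by rewrite mulNmx mulmxN !mulmxA.
rewrite !mulmxA mulVmx ?frame_unit // mul1mx -(mulmxA D S) -invmx_frame.
by rewrite mulmxKV ?frame_unit.
Qed.

End Frames.

Section Displacement.
Variables (R : rcfType) (sp : Mod R -> Mod R -> R * R) (o : bool).
Hypothesis hsp : is_scalar_product sp.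

Lemma lifts_levi_sum (e : 'I_3 -> 'rV[R]_3) (eA : 'I_3 -> Mod R) (d : 'I_3 -> R) i :
  (forall j, (eA j).1 = e j) ->
  (\sum_j \sum_k (levi R i j k * d k) *: eA j).1 = row i (levi_mx (\row_k d k) *m frame_mx e).
Proof.
move=> eAe; rewrite fst_sum row_mul mulmx_sum_row; apply: eq_bigr => j _.
rewrite fst_sum -scaler_suml /= eAe row_frame_mx !mxE; congr (_ *: _).
by apply: eq_bigr => k _; rewrite mxE.
Qed.

Lemma graph_lifts L (e : 'I_3 -> 'rV[R]_3) (x : 'I_3 -> Mod R) :
  (forall i, x i \in graph L /\ proj (x i) = e i) <-> (forall i, x i = (e i, e i *m L)).
Proof.
split => xP i; last by rewrite xP mem_graph.
have [/[!mem_graph] /eqP x2 x1] := xP i.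
by apply: injective_projections; rewrite /= ?x2 -/(proj _) x1.
Qed.

Lemma Diff_graphP La Lb v : Diff sp o (graph La) (graph Lb) v <->
  exists2 e, pos_orthonormal sp o e &
    exists d, v = d *m frame_mx e /\ Lb - La = rot (frame_mx e) d.
Proof.
split => [[e [pe [d [vE liftsE]]]] | [e pe [d [vE LE]]]].
  have eU := frame_unit hsp pe.1.
  exists e => //; exists (\row_k d k); split.
    by rewrite frame_mx_sum vE; apply: eq_bigr => k _; rewrite mxE.
  rewrite /rot -mulmxA -[LHS](mulKmx eU); congr (_ *m _).
  apply/row_matrixP => i; rewrite row_mul row_frame_mx mulmxBr.
  pose lift (L : 'M[R]_3) j : Mod R := (e j, e j *m L).
  have /(congr1 snd) /= := liftsE (lift La) (lift Lb)
    (proj2 (@graph_lifts La e _) (fun j => erefl))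
    (proj2 (@graph_lifts Lb e _) (fun j => erefl)) i.
  by rewrite (lifts_levi_sum d i (fun j => erefl)) => ->; rewrite addrAC subrr add0r.
exists e; split => //; exists (fun k => d 0 k); split; first by rewrite -frame_mx_sum.
move=> eA eB /graph_lifts eAE /graph_lifts eBE i; rewrite eAE eBE.
apply: injective_projections; rewrite /= ?addr0 //.
rewrite (lifts_levi_sum _ i (fun j => congr1 fst (eAE j))).
have -> : \row_k d 0 k = d by apply/rowP => k; rewrite mxE.
have -> : levi_mx d *m frame_mx e = frame_mx e *m (Lb - La).
  by rewrite LE /rot -mulmxA mulKVmx // (frame_unit hsp pe.1).
by rewrite row_mul row_frame_mx mulmxBr addrC subrK.
Qed.

End Displacement.

Definition frame3 (R : rcfType) (a b c : 'rV[R]_3) (i : 'I_3) : 'rV[R]_3 := [:: a; b; c]`_i.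

Section FrameExistence.
Variables (R : rcfType) (sp : Mod R -> Mod R -> R * R).
Hypothesis hsp : is_scalar_product sp.
Local Notation S := (gram_re sp).
Local Notation "''[' a , b ]" := (vdot sp a b).
Implicit Types (a b c : 'rV[R]_3).

Definition normalize a := (Num.sqrt '[a, a])^-1 *: a.

Lemma normalize_unit a : a != 0 -> '[normalize a, normalize a] = 1.
Proof.
move=> a0; have g0 := vdot_gt0 hsp a0.
rewrite /normalize (vdotZl hsp) (vdotZr hsp) mulrA -expr2 exprVn sqr_sqrtr ?ltW // mulVf //.
by rewrite gt_eqF.
Qed.

Lemma exists_orthogonal a b : exists2 c, c != 0 & '[c, a] = 0 /\ '[c, b] = 0.
Proof.
pose M := row_mx (S *m a^T) (S *m b^T).
have : ~~ row_free M by rewrite /row_free neq_ltn (leq_ltn_trans (rank_leq_col M)).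
rewrite -kermx_eq0 => /rowV0Pn [c /sub_kermxP/eqP]; rewrite mul_mx_row row_mx_eq0.
case/andP => /eqP ca /eqP cb c0; exists c => //.
by rewrite !(vdotE hsp) -!mulmxA ca cb mxE.
Qed.

Lemma frame3_ortho a b c : '[a, a] = 1 -> '[b, b] = 1 -> '[c, c] = 1 ->
  '[a, b] = 0 -> '[a, c] = 0 -> '[b, c] = 0 ->
  forall i j, '[frame3 a b c i, frame3 a b c j] = (i == j)%:R.
Proof.
move=> aa bb cc ab ac bc; do 2 elim/ord3P; rewrite /frame3 //=; by rewrite (vdotC hsp).
Qed.

Lemma orthonormal_dim2 a b : '[a, a] = 1 -> '[b, b] = 1 -> '[a, b] = 0 ->
  \dim <<[:: a; b]>> = 2%N.
Proof.
move=> aa bb ab; apply/eqP; rewrite -[2%N]/(size [:: a; b]).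
rewrite -/(free _) free_cons seq1_free span_seq1; apply/andP; split.
  apply/vlineP => -[k ak]; move: ab aa; rewrite ak (vdotZl hsp) !(vdotZr hsp) bb mulr1 => ->.
  by rewrite !mul0r => /eqP; rewrite eq_sym oner_eq0.
by apply/eqP => b0; move: bb; rewrite b0 (vdot0l hsp) => /eqP; rewrite eq_sym oner_eq0.
Qed.

Lemma frame_ex o e0 e1 : '[e0, e0] = 1 -> '[e1, e1] = 1 -> '[e0, e1] = 0 ->
  exists e2, pos_orthonormal sp o (frame3 e0 e1 e2).
Proof.
move=> h00 h11 h01; have [v v0 [v0e v1e]] := exists_orthogonal e0 e1.
pose x := normalize v; have xx : '[x, x] = 1 by exact: normalize_unit.
have [x0 x1] : '[e0, x] = 0 /\ '[e1, x] = 0.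
  by rewrite !(vdotZr hsp) (vdotC hsp e0) (vdotC hsp e1) v0e v1e !mulr0.
have ortho y : '[y, y] = 1 -> '[e0, y] = 0 -> '[e1, y] = 0 ->
    forall i j, '[frame3 e0 e1 y i, frame3 e0 e1 y j] = (i == j)%:R.
  by move=> *; apply: frame3_ortho.
have xN : '[- x, - x] = 1 by rewrite (vdotNl hsp) (vdotNr hsp) opprK.
have [x0N x1N] : '[e0, - x] = 0 /\ '[e1, - x] = 0 by rewrite !(vdotNr hsp) x0 x1 oppr0.
have detN : \det (frame_mx (frame3 e0 e1 (- x))) = - \det (frame_mx (frame3 e0 e1 x)).
  by rewrite !det3 !mxE /=; ring.
have := frame_unit hsp (ortho x xx x0 x1); rewrite unitmxE unitfE.
case: ltgtP => // det_sign _.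
  exists (if o then - x else x).
  by case: o; split; rewrite /= ?detN ?oppr_gt0 //; apply: ortho.
exists (if o then x else - x).
by case: o; split; rewrite /= ?detN ?oppr_lt0 //; apply: ortho.
Qed.

End FrameExistence.

Section Axes.
Variables (R : rcfType) (sp : Mod R -> Mod R -> R * R).
Hypothesis hsp : is_scalar_product sp.
Local Notation S := (gram_re sp).
Local Notation K := (gram_du sp).
Local Notation "''[' a , b ]" := (vdot sp a b).
Implicit Types (z : Mod R) (L D : 'M[R]_3).

Lemma sliding_fst z : is_sliding sp z -> z.1 != 0.
Proof. by case=> z_eps _; apply/eqP => /in_epsM_fst. Qed.

Lemma dscale_real (k : R) x : dscale (k, 0) x = k *: x.
Proof. by rewrite /dscale /= scale0r addr0; case: x. Qed.

Lemma sp_dscale2 c u : sp (dscale c u) (dscale c u) = dmul c (dmul c (sp u u)).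
Proof. by rewrite !(sp_dscalel hsp) (spC hsp u) (sp_dscalel hsp). Qed.

Lemma sliding_real z : is_sliding sp z ->
  exists a u, [/\ 0 < a, sp u u = (1, 0) & z = a *: u].
Proof.
case=> _ [a [b [u [[a0 [uu ->]] /eqP]]]]; rewrite mulf_eq0 invr_eq0 (gt_eqF a0) orbF.
by move=> /eqP->; exists a, u; rewrite dscale_real.
Qed.

Lemma sliding_du z : is_sliding sp z -> (sp z z).2 = 0.
Proof.
move=> /sliding_real [a [u [_ uu ->]]]; rewrite -dscale_real sp_dscale2 uu.
by rewrite /dmul /=; ring.
Qed.

Lemma on_axisP z P : is_sliding sp z -> on_axis sp z P <-> in_E sp P /\ z \in P.
Proof.
move=> zs; split => [[EP [a [b [u [[a0 [uu zu]] uP]]]]] | [EP zP]].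
  split=> //; suff b0 : b = 0 by rewrite zu b0 dscale_real memvZ.
  have := sliding_du zs; rewrite zu sp_dscale2 uu /dmul /= => du0.
  have : (a * b) *+ 2 == 0 by rewrite -du0 mulr2n; apply/eqP; ring.
  by rewrite mulrn_eq0 /= mulf_eq0 (gt_eqF a0) => /eqP.
have [a [u [a0 uu zu]]] := sliding_real zs.
split=> //; exists a, 0, u; split; first by do 2!split=> //; rewrite dscale_real.
by rewrite -[u](scalerK (lt0r_neq0 a0)) -zu memvZ.
Qed.

Lemma parallel_scale z1 z2 : is_sliding sp z2 -> parallel_axes sp z1 z2 ->
  exists2 m, m != 0 & z2.1 = m *: z1.1.
Proof.
move=> zs2 [w1 [w2 [[a1 [b1 [u1 [[a10 [_ ->]] ->]]]] [[a2 [b2 [u2 [[_ [_ z2E]] ->]]]] w12]]]].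
have /vlineP [k u21] : proj u2 \in <[proj u1]>%VS by rewrite w12 memv_line.
have z21 : z2.1 = (a2 * k / a1) *: (dscale (a1, b1) u1).1.
  by rewrite z2E /= -/(proj u2) u21 !scalerA divfK ?gt_eqF.
exists (a2 * k / a1) => //; apply: contraTneq (sliding_fst zs2) => m0.
by rewrite z21 m0 scale0r eqxx.
Qed.

Lemma moment_orthogonal L z : graph_cond sp L -> is_sliding sp z ->
  '[z.2 - z.1 *m L, z.1] = 0.
Proof.
move=> LK zs; have := sliding_du zs.
rewrite (spE hsp) /= !mx11_add -!(vdotE hsp) (vdotC hsp z.1 z.2) => du.
have : (z.1 *m (K + L *m S + (L *m S)^T) *m z.1^T) 0 0 = 0 by rewrite LK mulmx0 mul0mx mxE.
rewrite !mulmxDr !mulmxDl !mx11_add (form_trmx (L *m S)^T) trmxK !mulmxA -(vdotE hsp).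
by rewrite (vdotBl hsp); lra.
Qed.

Lemma axis_skew L z : graph_cond sp L -> is_sliding sp z ->
  exists2 D, skew sp D & z.1 *m D = z.2 - z.1 *m L.
Proof.
by move=> LK zs; apply: (skew_through hsp (sliding_fst zs)); apply: moment_orthogonal.
Qed.

Lemma on_axis_graph L D z : graph_cond sp L -> is_sliding sp z ->
  skew sp D -> z.1 *m D = z.2 - z.1 *m L -> on_axis sp z (graph (L + D)).
Proof.
move=> LK zs skD zD; apply/on_axisP => //; split.
  by apply/(in_E_graph hsp (L + D))/(graph_condD D LK).
by rewrite mem_graph mulmxDr zD addrC subrK.
Qed.

Lemma graph_cond_half : graph_cond sp (- 2^-1 *: (K *m invmx S)).
Proof.
rewrite /graph_cond -!scalemxAl mulmxKV ?(gram_re_unit hsp) // linearZ /= (gram_du_tr hsp).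
rewrite -[X in X + _ + _]scale1r -!scalerDl (_ : 1 + _ + _ = 0) ?scale0r //.
by field.
Qed.

Lemma graph_through z : is_sliding sp z -> exists2 L, graph_cond sp L & z \in graph L.
Proof.
move=> zs; have [D skD zD] := axis_skew graph_cond_half zs.
exists (- 2^-1 *: (K *m invmx S) + D); first exact/(graph_condD D graph_cond_half).
by rewrite mem_graph mulmxDr zD addrC subrK.
Qed.

End Axes.

Lemma subv_vpick (K : fieldType) (vT : vectType K) (Y : {vspace vT}) :
  (\dim Y <= 1)%N -> (Y <= <[vpick Y]>)%VS.
Proof.
move=> dimY; have [->|Y0] := eqVneq Y 0%VS; first exact: sub0v.
have pY : (<[vpick Y]> <= Y)%VS by rewrite -memvE memv_pick.
rewrite -(dimv_leqif_sup pY).2 dim_vline vpick0 Y0 eqn_leq dimY /=.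
by rewrite andbT lt0n dimv_eq0.
Qed.

Section Orthogonal.
Variables (R : rcfType) (sp : Mod R -> Mod R -> R * R).
Hypothesis hsp : is_scalar_product sp.
Local Notation "''[' a , b ]" := (vdot sp a b).

Lemma dim_orthogonal_plane (W : {vspace 'rV[R]_3}) (ys : seq 'rV[R]_3) : \dim W = 2%N ->
  (forall y, y \in ys -> forall q, q \in W -> '[y, q] = 0) -> (\dim <<ys>> <= 1)%N.
Proof.
move=> dimW ysW.
have spanW y : y \in <<ys>>%VS -> forall q, q \in W -> '[y, q] = 0.
  move=> /(coord_span (X := in_tuple ys)) -> q qW; apply: (big_ind (fun y => '[y, q] = 0)).
  - exact: vdot0l.
  - by move=> a b aq bq; rewrite (vdotDl hsp) aq bq addr0.
  - by move=> i _; rewrite (vdotZl hsp) ysW ?mulr0 // mem_nth.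
have capW : (<<ys>> :&: W = 0)%VS.
  apply/eqP; rewrite -subv0; apply/subvP => x /memv_capP [xY xW]; rewrite memv0.
  by apply: contraT => /(vdot_gt0 hsp); rewrite spanW // ltxx.
have := dimv_sum_cap <<ys>> W; rewrite capW dimv0 addn0 dimW.
have := dimvS (subvf (<<ys>> + W)%VS); rewrite dimvf dim_matrix.
by rewrite mul1r => le3 dimE; move: le3; rewrite dimE addn2 !ltnS.
Qed.

End Orthogonal.

Section CoplanarDependent.
Variables (R : rcfType) (sp : Mod R -> Mod R -> R * R) (o : bool).
Variables (La : 'M[R]_3) (W : {vspace 'rV[R]_3}) (z1 z2 z3 : Mod R).
Hypotheses (hsp : is_scalar_product sp) (LaK : graph_cond sp La) (dimW : \dim W = 2%N).
Hypothesis cop : forall z P, z \in [:: z1; z2; z3] -> on_axis sp z P ->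
  exists2 w, w \in W & Diff sp o (graph La) P w.
Local Notation "''[' a , b ]" := (vdot sp a b).
Implicit Types (z : Mod R) (D : 'M[R]_3).

Lemma axis_rot z D : z \in [:: z1; z2; z3] -> is_sliding sp z ->
  skew sp D -> z.1 *m D = z.2 - z.1 *m La ->
  exists2 e, (forall i j, '[e i, e j] = (i == j)%:R) &
    exists2 d, d *m frame_mx e \in W & D = rot (frame_mx e) d.
Proof.
move=> zl zs skD zD; have [v vW] := cop zl (on_axis_graph hsp LaK zs skD zD).
case/(Diff_graphP _ hsp) => e [eo _] [d [vE DE]].
exists e => //; exists d; first by rewrite -vE.
by rewrite -DE addrC addKr.
Qed.

Lemma axis_dir_in z : z \in [:: z1; z2; z3] -> is_sliding sp z -> z.1 \in W.
Proof.
(* Adding the rotation about [z.1] keeps the point on the axis and adds [z.1]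
   to its axial vector. *)
move=> zl zs; have [D1 skD1 zD1] := axis_skew hsp LaK zs.
have [e1 eo1 [d1 v1W D1E]] := axis_rot zl zs skD1 zD1.
set E1 := frame_mx e1 in v1W D1E; have E1U := frame_unit hsp eo1.
set d' := z.1 *m invmx E1; set D2 := D1 + rot E1 d'.
have skD2 : skew sp D2 by apply: skewD => //; apply: rot_skew.
have zD2 : z.1 *m D2 = z.2 - z.1 *m La.
  by rewrite mulmxDr -[X in X *m rot _ _](mulmxKV E1U) rot_axis // addr0.
have [e2 eo2 [d2 v2W D2E]] := axis_rot zl zs skD2 zD2.
have D2E1 : D2 = rot E1 (d1 + d') by rewrite /D2 rotD D1E.
suff : (d1 + d') *m E1 \in W.
  by rewrite mulmxDl mulmxKV // => /memvB /(_ v1W); rewrite addrC addKr.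
have := rot_axis E1U (d1 + d'); rewrite -D2E1 D2E.
case/(rot_ker (frame_unit hsp eo2)) => [d20 | /vlineP [k ->]]; last by rewrite memvZ.
by move: D2E; rewrite d20 rot0 D2E1 => /(rot_eq0 E1U) ->; rewrite mul0mx mem0v.
Qed.

Lemma axis_moment_orthogonal z D : z \in [:: z1; z2; z3] -> is_sliding sp z ->
  skew sp D -> z.1 *m D = z.2 - z.1 *m La -> forall q, q \in W -> '[z.1 *m D, q] = 0.
Proof.
move=> zl zs skD zD q qW; have [e eo [d vW DE]] := axis_rot zl zs skD zD.
set v := d *m frame_mx e in vW; have EU := frame_unit hsp eo.
have vD : v *m D = 0 by rewrite DE rot_axis.
have [wv | ] := boolP (free [:: z.1; v]).
  have Wwv : <<[:: z.1; v]>>%VS = W.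
    apply/eqP; rewrite eqEdim dimW (eqP wv) leqnn andbT.
    by apply/span_subvP => x; rewrite !inE => /orP [] /eqP ->; rewrite ?(axis_dir_in zl zs).
  move: qW; rewrite -Wwv span_cons span_seq1.
  case/memv_addP => _ /vlineP [a ->] [_ /vlineP [b ->] ->].
  rewrite (vdotDr hsp) !(vdotZr hsp) (skew_vdot_self hsp _ skD) (skew_vdot hsp _ _ skD).
  by rewrite vD (vdot0r hsp) oppr0 !mulr0 addr0.
rewrite free_cons seq1_free span_seq1 negb_and !negbK => /orP [/vlineP [k ->] | /eqP v0].
  by rewrite -scalemxAl vD scaler0 (vdot0l hsp).
have d0 : d = 0 by rewrite -[d](mulmxK EU) -/v v0 mul0mx.
by rewrite DE d0 rot0 // mulmx0 (vdot0l hsp).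
Qed.

Lemma moments_in_line : (forall z, z \in [:: z1; z2; z3] -> is_sliding sp z) ->
  exists n, forall z, z \in [:: z1; z2; z3] -> z.2 - z.1 *m La \in <[n]>%VS.
Proof.
move=> zs; set ys := [seq z.2 - z.1 *m La | z <- [:: z1; z2; z3]].
have /subv_vpick ysn : (\dim <<ys>> <= 1)%N.
  apply: (dim_orthogonal_plane hsp dimW) => _ /mapP [z zl ->] q qW.
  have [D skD zD] := axis_skew hsp LaK (zs z zl).
  by rewrite -zD (axis_moment_orthogonal zl (zs z zl) skD zD).
exists (vpick <<ys>>%VS) => z zl; apply: (subvP ysn); apply: memv_span.
exact: (map_f (fun z : Mod R => z.2 - z.1 *m La)).
Qed.

End CoplanarDependent.

Lemma not_free3 (K : fieldType) (vT : vectType K) (x1 x2 x3 a b : vT) :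
  {subset [:: x1; x2; x3] <= <<[:: a; b]>>%VS} -> ~~ free [:: x1; x2; x3].
Proof.
move=> /span_subvP /dimvS sub; apply/negP => /eqP d3.
by have := leq_trans sub (dim_span [:: a; b]); rewrite d3.
Qed.

Lemma coplanar_dependent (R : rcfType) (sp : Mod R -> Mod R -> R * R) (o : bool)
    (z1 z2 z3 : Mod R) : is_scalar_product sp ->
  is_sliding sp z1 -> is_sliding sp z2 -> is_sliding sp z3 ->
  parallel_axes sp z1 z2 -> parallel_axes sp z1 z3 ->
  coplanar_axes sp o z1 z2 z3 -> ~~ free [:: z1; z2; z3].
Proof.
move=> hsp zs1 zs2 zs3 p12 p13 [_ [W [/(in_EP hsp) [La -> LaK] [dimW cop]]]].
have zs z : z \in [:: z1; z2; z3] -> is_sliding sp z by rewrite !inE => /or3P [] /eqP ->.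
have [n zn] := moments_in_line hsp LaK dimW cop zs.
have [m2 _ z21] := parallel_scale zs2 p12; have [m3 _ z31] := parallel_scale zs3 p13.
apply: (@not_free3 _ _ _ _ _ (z1.1, z1.1 *m La) (0, n)) => z zl.
have [m zm] : exists m, z.1 = m *: z1.1.
  move: zl; rewrite !inE => /or3P [] /eqP ->.
  - by exists 1; rewrite scale1r.
  - by exists m2.
  - by exists m3.
have /vlineP [t zt] := zn z zl.
have -> : z = m *: (z1.1, z1.1 *m La) + t *: (0, n).
  apply: injective_projections; rewrite /= ?scaler0 ?addr0 //.
  by rewrite -zt scalemxAl -zm addrC subrK.
by apply: memvD; apply: memvZ; apply: memv_span; rewrite !inE eqxx ?orbT.
Qed.

Lemma scale_vec_inj (K : fieldType) (V : lmodType K) (w : V) (k k' : K) :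
  w != 0 -> k *: w = k' *: w -> k = k'.
Proof.
by move=> w0 /eqP; rewrite -subr_eq0 -scalerBl scaler_eq0 (negbTE w0) orbF subr_eq0 => /eqP.
Qed.

Lemma line_of_relation (K : fieldType) (vT : vectType K) (a b : K) (u v : vT) :
  (a != 0) || (b != 0) -> a *: u + b *: v = 0 ->
  exists y, u \in <[y]>%VS /\ v \in <[y]>%VS.
Proof.
have [-> /= b0 | a0 _ uv] := eqVneq a 0.
  rewrite scale0r add0r => /eqP; rewrite scaler_eq0 (negbTE b0) => /eqP ->.
  by exists u; rewrite memv_line mem0v.
exists v; split; last exact: memv_line.
apply/vlineP; exists (- (b / a)); apply: (scalerI a0).
by rewrite scalerA mulrN mulrCA divff // mulr1 scaleNr; apply/eqP; rewrite -addr_eq0 uv.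
Qed.

Lemma dependent_moments (R : rcfType) (z1 z2 z3 : Mod R) (m2 m3 : R) :
  z1.1 != 0 -> z3 != 0 -> z2.1 = m2 *: z1.1 -> z3.1 = m3 *: z1.1 ->
  ~~ free [:: z1; z2; z3] ->
  exists y, z2.2 - m2 *: z1.2 \in <[y]>%VS /\ z3.2 - m3 *: z1.2 \in <[y]>%VS.
Proof.
move=> w0 z30 z21 z31.
rewrite free_cons span_cons span_seq1 negb_and negbK free_cons seq1_free span_seq1.
rewrite negb_and !negbK (negbTE z30) orbF.
case/orP => [/memv_addP [_ /vlineP [a ->] [_ /vlineP [b ->] z1E]] | /vlineP [c z2E]].
  have z1f : z1.1 = a *: z2.1 + b *: z3.1 := congr1 fst z1E.
  have z1s : z1.2 = a *: z2.2 + b *: z3.2 := congr1 snd z1E.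
  have s1 : a * m2 + b * m3 = 1.
    by apply: (scale_vec_inj w0); rewrite scale1r scalerDl -!scalerA -z21 -z31.
  apply: (line_of_relation (a := a) (b := b)).
    rewrite -negb_and; apply/negP => /andP [/eqP a0 /eqP b0].
    by move: s1; rewrite a0 b0 !mul0r addr0 => /eqP; rewrite eq_sym oner_eq0.
  rewrite !scalerBr !scalerA addrACA -opprD -!scalerDl s1 scale1r.
  by rewrite -z1s subrr.
apply: (line_of_relation (a := 1) (b := - c)); first by rewrite oner_neq0.
have m2c : m2 = c * m3 by apply: (scale_vec_inj w0); rewrite -scalerA -z31 -z21 z2E.
by rewrite scale1r z2E /= m2c scaleNr scalerBr !scalerA subrr.
Qed.

Section DependentCoplanar.
Variables (R : rcfType) (sp : Mod R -> Mod R -> R * R) (o : bool).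
Hypothesis hsp : is_scalar_product sp.
Local Notation "''[' a , b ]" := (vdot sp a b).

Lemma Diff_in_plane e L Lp : pos_orthonormal sp o e -> graph_cond sp L -> graph_cond sp Lp ->
  '[e i0 *m (Lp - L), e i1] = 0 ->
  exists2 v, v \in <<[:: e i0; e i1]>>%VS & Diff sp o (graph L) (graph Lp) v.
Proof.
move=> pe LK LpK D01.
have skD : skew sp (Lp - L) by apply/(graph_condD _ LK); rewrite addrC subrK.
set E := frame_mx e; set d := axial (E *m (Lp - L) *m gram_re sp *m E^T).
(* The [e i2]-coordinate of the axial vector [d *m E] is the left-hand side of [D01]. *)
exists (d *m E).
  rewrite frame_mx_sum sum3 (_ : d 0 i2 = 0) ?scale0r ?addr0.
    by apply: memvD; apply: memvZ; apply: memv_span; rewrite !inE eqxx ?orbT.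
  by rewrite /d mxE /= frame_formE.
apply/(Diff_graphP _ hsp); exists e => //; exists d; split => //.
exact: (skew_rot hsp pe.1 skD).
Qed.

End DependentCoplanar.

Lemma dependent_coplanar (R : rcfType) (sp : Mod R -> Mod R -> R * R) (o : bool)
    (z1 z2 z3 : Mod R) : is_scalar_product sp ->
  is_sliding sp z1 -> is_sliding sp z2 -> is_sliding sp z3 ->
  parallel_axes sp z1 z2 -> parallel_axes sp z1 z3 ->
  ~~ free [:: z1; z2; z3] -> coplanar_axes sp o z1 z2 z3.
Proof.
move=> hsp zs1 zs2 zs3 p12 p13 dep; have w0 := sliding_fst zs1.
have [m2 m20 z21] := parallel_scale zs2 p12; have [m3 m30 z31] := parallel_scale zs3 p13.
have z30 : z3 != 0 by apply: contraNneq (sliding_fst zs3) => ->.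
have [y [y2 y3]] := dependent_moments w0 z30 z21 z31 dep.
have zs z : z \in [:: z1; z2; z3] -> is_sliding sp z by rewrite !inE => /or3P [] /eqP ->.
have moments z : z \in [:: z1; z2; z3] ->
    exists2 m, m != 0 & z.1 = m *: z1.1 /\ z.2 - m *: z1.2 \in <[y]>%VS.
  rewrite !inE => /or3P [] /eqP ->.
  - by exists 1; rewrite ?oner_neq0 ?scale1r ?subrr ?mem0v.
  - by exists m2.
  - by exists m3.
have [c c0 [cw cy]] := exists_orthogonal hsp z1.1 y.
set e0 := normalize sp z1.1; set e1 := normalize sp c.
have e01 : vdot sp e0 e1 = 0 by rewrite (vdotZl hsp) (vdotZr hsp) (vdotC hsp) cw !mulr0.
have [e2 pe] := frame_ex hsp o (normalize_unit hsp w0) (normalize_unit hsp c0) e01.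
have [L LK z1L] := graph_through hsp zs1.
exists (graph L), <<[:: e0; e1]>>%VS; split; first exact/(in_E_graph hsp).
split; first exact: (orthonormal_dim2 hsp (normalize_unit hsp w0) (normalize_unit hsp c0) e01).
move=> z P zl /(on_axisP hsp _ (zs z zl)) [/(in_EP hsp) [Lp -> LpK]].
rewrite mem_graph => /eqP z2E.
apply: (Diff_in_plane hsp pe LK LpK) => /=.
have [m m0 [zm /vlineP [t zt]]] := moments z zl.
rewrite /e0 /e1 /normalize -scalemxAl (vdotZl hsp) (vdotZr hsp).
suff -> : vdot sp (z1.1 *m (Lp - L)) c = 0 by rewrite !mulr0.
apply: (mulfI m0); rewrite mulr0 -(vdotZl hsp) scalemxAl mulmxBr -[X in X *m Lp]zm -z2E.
move: z1L; rewrite mem_graph => /eqP z1L.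
by rewrite -scalemxAl -z1L zt (vdotZl hsp) (vdotC hsp) cy mulr0.
Qed.

Unset Implicit Arguments.
Set Strict Implicit.

Theorem proposition17 (R : rcfType) (sp : Mod R -> Mod R -> R * R) (o : bool)
    (z1 z2 z3 : Mod R) :
  is_scalar_product sp ->
  is_sliding sp z1 -> is_sliding sp z2 -> is_sliding sp z3 ->
  parallel_axes sp z1 z2 -> parallel_axes sp z2 z3 -> parallel_axes sp z1 z3 ->
  (~~ free [:: z1; z2; z3] <-> coplanar_axes sp o z1 z2 z3).
Proof.
move=> hsp zs1 zs2 zs3 p12 _ p13; split.
  exact: dependent_coplanar.
exact: coplanar_dependent.
Qed.
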